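(* Let $\mathcal{T}=\mathcal{X}=\mathcal{Y}=\{0,1\}$ and $P\in\Delta_{\mathcal{T},\mathcal{X},\mathcal{Y}}$ with $a=P(T=0)\in(0,1)$, and let $b,c,d,e$, $Q_0$, $g_1,g_2$ and the bounds $g_{i,\min},g_{i,\max}$ be as in the context. If $\tilde Q\in\arg\max_{Q\in\Delta_P}H_Q(T\mid X,Y)$ lies on the relative boundary of $\Delta_P$, then $\tilde Q$ has parameters $(g_1,g_2)=(g_{1,\min},g_{2,\min})$ or $(g_1,g_2)=(g_{1,\max},g_{2,\max})$.
   Context: $\Delta_P=\{Q: Q(X=x,T=t)=P(X=x,T=t),\ Q(Y=y,T=t)=P(Y=y,T=t)\ \forall x,y,t\}$. Parameters: $a=P(T=0)$, $b=P(X=0\mid T=0)$, $c=P(X=0\mid T=1)$, $d=P(Y=0\mid T=0)$, $e=P(Y=0\mid T=1)$. Every $Q\in\Delta_P$ can be written uniquely as $Q(0,x,y)=a\,(P(x\mid 0)P(y\mid 0)+\sigma(x,y)g_1)$ and $Q(1,x,y)=(1-a)(P(x\mid 1)P(y\mid 1)+\sigma(x,y)g_2)$, where $\sigma(x,y)=+1$ if $x=y$ and $-1$ if $x\neq y$; i.e. $Q=Q_0+a g_1\gamma_{0}+(1-a)g_2\gamma_1$ with $Q_0(t,x,y)=P(t)P(x\mid t)P(y\mid t)$ and $\gamma_t=\delta_{t,0,0}+\delta_{t,1,1}-\delta_{t,0,1}-\delta_{t,1,0}$. The admissible parameters form the rectangle $g_{1,\min}\le g_1\le g_{1,\max}$,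 $g_{2,\min}\le g_2\le g_{2,\max}$ with $g_{1,\min}=-\min\{bd,(1-b)(1-d)\}$, $g_{1,\max}=\min\{b(1-d),(1-b)d\}$, $g_{2,\min}=-\min\{ce,(1-c)(1-e)\}$, $g_{2,\max}=\min\{c(1-e),(1-c)e\}$. *)

From Stdlib Require Import Reals List.
Import ListNotations.
Open Scope R_scope.

(* A (joint) distribution on T x X x Y = {0,1}^3, value Q t x y = Q(T=t,X=x,Y=y).
   The symbol 0 of {0,1} is encoded by [false], 1 by [true]. *)
Definition Dist := bool -> bool -> bool -> R.

Definition sum2 (f : bool -> R) : R := f false + f true.

Definition is_dist (Q : Dist) : Prop :=
  (forall t x y, 0 <= Q t x y) /\
  sum2 (fun t => sum2 (fun x => sum2 (fun y => Q t x y))) = 1.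

Definition margT (Q : Dist) (t : bool) : R := sum2 (fun x => sum2 (fun y => Q t x y)).
Definition margXT (Q : Dist) (x t : bool) : R := sum2 (fun y => Q t x y).
Definition margYT (Q : Dist) (y t : bool) : R := sum2 (fun x => Q t x y).
Definition margXY (Q : Dist) (x y : bool) : R := sum2 (fun t => Q t x y).

Definition DeltaP (P Q : Dist) : Prop :=
  is_dist Q /\
  (forall x t, margXT Q x t = margXT P x t) /\
  (forall y t, margYT Q y t = margYT P y t).

(* Conditional entropy H_Q(T | X,Y) (natural log; convention 0 log 0 = 0). *)
Definition cond_ent_term (q qxy : R) : R :=
  if Rlt_dec 0 q then q * ln (qxy / q) else 0.
Definition condEntropy_T_XY (Q : Dist) : R :=
  sum2 (fun t => sum2 (fun x => sum2 (fun y => cond_ent_term (Q t x y) (margXY Q x y)))).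

Definition par_a (P : Dist) : R := margT P false.
Definition par_b (P : Dist) : R := margXT P false false / margT P false.
Definition par_c (P : Dist) : R := margXT P false true / margT P true.
Definition par_d (P : Dist) : R := margYT P false false / margT P false.
Definition par_e (P : Dist) : R := margYT P false true / margT P true.

(* Parameters (g1,g2) of Q in Delta_P, read off from
   Q(0,0,0) = a (b d + g1),  Q(1,0,0) = (1-a) (c e + g2). *)
Definition par_g1 (P Q : Dist) : R := Q false false false / par_a P - par_b P * par_d P.
Definition par_g2 (P Q : Dist) : R := Q true false false / (1 - par_a P) - par_c P * par_e P.

Definition g1_min (P : Dist) : R :=
  - Rmin (par_b P * par_d P) ((1 - par_b P) * (1 - par_d P)).
Definition g1_max (P : Dist) : R :=
  Rmin (par_b P * (1 - par_d P)) ((1 - par_b P) * par_d P).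
Definition g2_min (P : Dist) : R :=
  - Rmin (par_c P * par_e P) ((1 - par_c P) * (1 - par_e P)).
Definition g2_max (P : Dist) : R :=
  Rmin (par_c P * (1 - par_e P)) ((1 - par_c P) * par_e P).

Definition near (eps : R) (Q R' : Dist) : Prop :=
  forall t x y, Rabs (Q t x y - R' t x y) < eps.

Definition aff_hull (S : Dist -> Prop) (Z : Dist) : Prop :=
  exists l : list (R * Dist),
    Forall (fun p => S (snd p)) l /\
    fold_right (fun p acc => fst p + acc) 0 l = 1 /\
    forall t x y, Z t x y = fold_right (fun p acc => fst p * snd p t x y + acc) 0 l.

Definition closure (S : Dist -> Prop) (Z : Dist) : Prop :=
  forall eps, 0 < eps -> exists W, S W /\ near eps Z W.

Definition rel_interior (S : Dist -> Prop) (Z : Dist) : Prop :=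
  S Z /\ exists eps, 0 < eps /\ forall W, aff_hull S W -> near eps W Z -> S W.

Definition rel_boundary (S : Dist -> Prop) (Z : Dist) : Prop :=
  closure S Z /\ ~ rel_interior S Z.

Definition is_argmax_condEnt (P Qt : Dist) : Prop :=
  DeltaP P Qt /\ forall Q, DeltaP P Q -> condEntropy_T_XY Q <= condEntropy_T_XY Qt.

(* Within one conditional table Q(t,.,.), a cell (x,y) that vanishes while its two
   neighbours in the table and the cell (1-t,x,y) are positive can be filled by moving
   along the direction gamma_t: the entropy term q ln((q+r)/q) has infinite slope at
   q = 0, so this strictly increases H(T|X,Y). Hence a maximiser with a zero not forced
   by a vanishing marginal has a zero on the diagonal of both tables or on the
   antidiagonal of both, and one without such a zero lies in the relative interior.
   A zero on the diagonal (antidiagonal) of table t makes g_t minimal (maximal). *)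

From Stdlib Require Import Reals Lra List Bool.
From Coquelicot Require Import Rcomplements.
Open Scope R_scope.

Lemma ln_le_sub_1 y : 0 < y -> ln y <= y - 1.
Proof.
  intros Hy. rewrite <- (exp_ln y) at 2 by exact Hy.
  pose proof (exp_ineq1_le (ln y)). lra.
Qed.

Lemma ln_sub_ln_le a b : 0 < a -> 0 < b -> ln a - ln b <= (a - b) / b.
Proof.
  intros Ha Hb. rewrite <- ln_div by assumption.
  replace ((a - b) / b) with (a / b - 1) by (field; lra).
  apply ln_le_sub_1, Rdiv_lt_0_compat; assumption.
Qed.

Lemma cond_ent_term_pos q m : 0 < q -> 0 < m -> cond_ent_term q m = q * (ln m - ln q).
Proof.
  intros Hq Hm. unfold cond_ent_term. destruct (Rlt_dec 0 q); [|lra].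
  rewrite ln_div; auto.
Qed.

Lemma cond_ent_term_0 m : cond_ent_term 0 m = 0.
Proof. unfold cond_ent_term. destruct (Rlt_dec 0 0); lra. Qed.

Lemma cond_ent_term_le_mass q m m' :
  0 <= q <= m -> m <= m' -> cond_ent_term q m <= cond_ent_term q m'.
Proof.
  intros [[Hq | <-] Hqm] Hm; [|rewrite !cond_ent_term_0; lra].
  rewrite !cond_ent_term_pos by lra.
  apply Rmult_le_compat_l; [lra|].
  pose proof (ln_le m m' ltac:(lra) Hm). lra.
Qed.

Lemma cond_ent_term_mass_lipschitz q m d :
  0 <= q <= m -> 0 <= d -> cond_ent_term q (m + d) <= cond_ent_term q m + d.
Proof.
  intros [[Hq | <-] Hqm] Hd; [|rewrite !cond_ent_term_0; lra].
  rewrite !cond_ent_term_pos by lra.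
  pose proof (ln_sub_ln_le (m + d) m ltac:(lra) ltac:(lra)) as Hln.
  replace (m + d - m) with d in Hln by ring.
  assert (q * (ln (m + d) - ln m) <= q * (d / m)) by (apply Rmult_le_compat_l; lra).
  assert (q * (d / m) <= d).
  { apply Rmult_le_reg_r with m; [lra|].
    replace (q * (d / m) * m) with (q * d) by (field; lra). nra. }
  lra.
Qed.

(* The contribution to H(T|X,Y) of one value (x,y), where q and r are the masses
   of (t0,x,y) and (not t0,x,y). *)
Definition pair_ent (q r : R) : R := cond_ent_term q (q + r) + cond_ent_term r (q + r).

Lemma pair_ent_0_l r : 0 <= r -> pair_ent 0 r = 0.
Proof.
  intros Hr. unfold pair_ent. rewrite Rplus_0_l, cond_ent_term_0.
  destruct Hr as [Hr | <-]; [rewrite cond_ent_term_pos by lra | rewrite cond_ent_term_0]; ring.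
Qed.

Lemma pair_ent_from_0 r d : 0 < r -> 0 < d -> d * (ln r - ln d) <= pair_ent d r.
Proof.
  intros Hr Hd. unfold pair_ent.
  pose proof (cond_ent_term_le_mass r r (d + r) ltac:(lra) ltac:(lra)) as Hother.
  rewrite (cond_ent_term_pos r r), Rminus_diag, Rmult_0_r in Hother by lra.
  rewrite cond_ent_term_pos by lra.
  assert (d * (ln r - ln d) <= d * (ln (d + r) - ln d)).
  { apply Rmult_le_compat_l; [lra|]. pose proof (ln_le r (d + r) Hr ltac:(lra)). lra. }
  lra.
Qed.

Lemma pair_ent_inc q r d : 0 <= q -> 0 <= r -> 0 < d -> pair_ent q r - d <= pair_ent (q + d) r.
Proof.
  intros Hq Hr Hd. unfold pair_ent.
  pose proof (cond_ent_term_le_mass r (q + r) (q + d + r) ltac:(lra) ltac:(lra)).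
  assert (cond_ent_term q (q + r) - d <= cond_ent_term (q + d) (q + d + r)).
  { destruct Hq as [Hq | <-].
    - rewrite !cond_ent_term_pos by lra.
      pose proof (ln_le (q + r) (q + d + r) ltac:(lra) ltac:(lra)).
      pose proof (ln_le (q + d) (q + d + r) ltac:(lra) ltac:(lra)).
      pose proof (ln_sub_ln_le (q + d) q ltac:(lra) Hq) as Hln.
      replace ((q + d - q) / q) with (d / q) in Hln by (field; lra).
      assert (q * (ln (q + d) - ln q) <= q * (d / q)) by (apply Rmult_le_compat_l; lra).
      replace (q * (d / q)) with d in * by (field; lra).
      assert (0 <= q * (ln (q + d + r) - ln (q + r))) by (apply Rmult_le_pos; lra).
      assert (0 <= d * (ln (q + d + r) - ln (q + d))) by (apply Rmult_le_pos; lra).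
      lra.
    - rewrite cond_ent_term_0, Rplus_0_l, cond_ent_term_pos by lra.
      pose proof (ln_le d (d + r) Hd ltac:(lra)).
      assert (0 <= d * (ln (d + r) - ln d)) by (apply Rmult_le_pos; lra). lra. }
  lra.
Qed.

Lemma pair_ent_dec q r d : 0 <= r -> 0 < d < q ->
  pair_ent q r - d * (1 + (ln (q + r) - ln q)) <= pair_ent (q - d) r.
Proof.
  intros Hr Hd. unfold pair_ent.
  pose proof (cond_ent_term_mass_lipschitz r (q - d + r) d ltac:(lra) ltac:(lra)) as Hother.
  replace (q - d + r + d) with (q + r) in Hother by ring.
  assert (cond_ent_term q (q + r) - d * (ln (q + r) - ln q)
          <= cond_ent_term (q - d) (q - d + r)).
  { rewrite !cond_ent_term_pos by lra.
    assert (Hratio : (q + r) / q <= (q - d + r) / (q - d)).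
    { apply Rmult_le_reg_r with (q * (q - d)); [nra|].
      replace ((q + r) / q * (q * (q - d))) with ((q + r) * (q - d)) by (field; lra).
      replace ((q - d + r) / (q - d) * (q * (q - d))) with ((q - d + r) * q) by (field; lra).
      nra. }
    apply ln_le in Hratio; [|apply Rdiv_lt_0_compat; lra].
    rewrite !ln_div in Hratio by lra.
    assert ((q - d) * (ln (q + r) - ln q) <= (q - d) * (ln (q - d + r) - ln (q - d)))
      by (apply Rmult_le_compat_l; lra).
    lra. }
  lra.
Qed.

Lemma exists_small_log_gap r C u : 0 < r -> 0 < u ->
  exists d, 0 < d < u /\ C <= ln r - ln d.
Proof.
  intros Hr Hu. pose proof (exp_pos (- C)) as He.
  exists (Rmin (u / 2) (r * exp (- C))).
  assert (Hd : 0 < Rmin (u / 2) (r * exp (- C)))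
    by (apply Rmin_glb_lt; [lra | apply Rmult_lt_0_compat; lra]).
  split; [split; [exact Hd | pose proof (Rmin_l (u / 2) (r * exp (- C))); lra]|].
  pose proof (ln_le _ _ Hd (Rmin_r (u / 2) (r * exp (- C)))) as Hln.
  rewrite ln_mult, ln_exp in Hln by lra. lra.
Qed.

(* Moving mass d onto a zero cell has gain of order d ln(1/d), which beats the
   linear losses on the other cells for small d. *)
Lemma pair_ent_shift_gain q2 q3 q4 r1 r2 r3 r4 :
  0 < r1 -> 0 <= q2 -> 0 <= r2 -> 0 < q3 -> 0 <= r3 -> 0 < q4 -> 0 <= r4 ->
  exists d, 0 < d < Rmin q3 q4 /\
    pair_ent 0 r1 + pair_ent q2 r2 + pair_ent q3 r3 + pair_ent q4 r4 <
    pair_ent d r1 + pair_ent (q2 + d) r2 + pair_ent (q3 - d) r3 + pair_ent (q4 - d) r4.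
Proof.
  intros Hr1 Hq2 Hr2 Hq3 Hr3 Hq4 Hr4.
  set (C := 4 + (ln (q3 + r3) - ln q3) + (ln (q4 + r4) - ln q4)).
  destruct (exists_small_log_gap r1 C (Rmin q3 q4) Hr1 ltac:(apply Rmin_glb_lt; lra))
    as [d [[Hd Hdq] HC]].
  exists d. split; [lra|].
  pose proof (Rmin_l q3 q4). pose proof (Rmin_r q3 q4).
  pose proof (pair_ent_from_0 r1 d Hr1 Hd).
  pose proof (pair_ent_inc q2 r2 d Hq2 Hr2 Hd).
  pose proof (pair_ent_dec q3 r3 d Hr3 ltac:(lra)).
  pose proof (pair_ent_dec q4 r4 d Hr4 ltac:(lra)).
  assert (d * C <= d * (ln r1 - ln d)) by (apply Rmult_le_compat_l; lra).
  rewrite pair_ent_0_l by lra. unfold C in *. nra.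
Qed.

Lemma pair_ent_comm q r : pair_ent q r = pair_ent r q.
Proof. unfold pair_ent. rewrite (Rplus_comm q r). ring. Qed.

Lemma condEntropy_pair_ent (Q : Dist) t0 x0 y0 :
  condEntropy_T_XY Q =
  pair_ent (Q t0 x0 y0) (Q (negb t0) x0 y0)
  + pair_ent (Q t0 x0 (negb y0)) (Q (negb t0) x0 (negb y0))
  + pair_ent (Q t0 (negb x0) y0) (Q (negb t0) (negb x0) y0)
  + pair_ent (Q t0 (negb x0) (negb y0)) (Q (negb t0) (negb x0) (negb y0)).
Proof.
  destruct t0; [rewrite !(pair_ent_comm (Q true _ _))|];
    unfold condEntropy_T_XY, margXY, pair_ent, sum2; destruct x0, y0; simpl; ring.
Qed.

(* Q + d * (the direction gamma_{t0} of the context, with the sign that puts +d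
   on (t0,x0,y0)); it keeps all (X,T) and (Y,T) marginals. *)
Definition shift (Q : Dist) (t0 x0 y0 : bool) (d : R) : Dist := fun t x y =>
  if Bool.eqb t t0 then
    (if Bool.eqb (Bool.eqb x x0) (Bool.eqb y y0) then Q t x y + d else Q t x y - d)
  else Q t x y.

Lemma shift_DeltaP P Q t0 x0 y0 d : DeltaP P Q -> 0 < d ->
  d <= Q t0 x0 (negb y0) -> d <= Q t0 (negb x0) y0 -> DeltaP P (shift Q t0 x0 y0 d).
Proof.
  intros [[Hn Hs] [HX HY]] Hd H1 H2.
  split; [split|split].
  - intros t x y. unfold shift. specialize (Hn t x y).
    destruct t0, x0, y0, t, x, y; simpl in *; lra.
  - rewrite <- Hs. unfold shift, sum2. destruct t0, x0, y0; simpl; lra.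
  - intros x t. rewrite <- HX. unfold margXT, shift, sum2.
    destruct t0, x0, y0, t, x; simpl; ring.
  - intros y t. rewrite <- HY. unfold margYT, shift, sum2.
    destruct t0, x0, y0, t, y; simpl; ring.
Qed.

Lemma argmax_no_isolated_zero P Q t0 x0 y0 : is_argmax_condEnt P Q ->
  Q t0 x0 y0 = 0 -> 0 < Q (negb t0) x0 y0 ->
  0 < Q t0 x0 (negb y0) -> 0 < Q t0 (negb x0) y0 -> False.
Proof.
  intros [HD Hmax] H0 Hr H3 H4. pose proof HD as [[Hn _] _].
  destruct (pair_ent_shift_gain (Q t0 (negb x0) (negb y0)) (Q t0 x0 (negb y0))
              (Q t0 (negb x0) y0) (Q (negb t0) x0 y0) (Q (negb t0) (negb x0) (negb y0))
              (Q (negb t0) x0 (negb y0)) (Q (negb t0) (negb x0) y0))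
    as [d [[Hd Hdq] Hgain]]; auto.
  pose proof (Rmin_l (Q t0 x0 (negb y0)) (Q t0 (negb x0) y0)).
  pose proof (Rmin_r (Q t0 x0 (negb y0)) (Q t0 (negb x0) y0)).
  pose proof (Hmax _ (shift_DeltaP P Q t0 x0 y0 d HD Hd ltac:(lra) ltac:(lra))) as Hle.
  rewrite !(condEntropy_pair_ent _ t0 x0 y0) in Hle. unfold shift in Hle.
  destruct t0, x0, y0; simpl in *; rewrite H0, Rplus_0_l in Hle; lra.
Qed.

Definition dot (w Z : Dist) : R :=
  sum2 (fun t => sum2 (fun x => sum2 (fun y => w t x y * Z t x y))).

Lemma aff_hull_dot_const (S : Dist -> Prop) w c W :
  aff_hull S W -> (forall Z, S Z -> dot w Z = c) -> dot w W = c.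
Proof.
  intros [l [Hl [Hsum HW]]] HS.
  assert (E : dot w W = fold_right (fun p acc => fst p * dot w (snd p) + acc) 0 l).
  { unfold dot, sum2. rewrite !HW. clear HW Hsum Hl.
    induction l as [|[lam Z] l IH]; simpl in *; [ring | rewrite <- IH; ring]. }
  rewrite E, <- (Rmult_1_r c), <- Hsum. clear E Hsum HW.
  induction l as [|[lam Z] l IH]; simpl; [ring|].
  inversion Hl; subst. rewrite HS, IH by assumption. ring.
Qed.

Definition cell_ind (t0 x0 y0 : bool) : Dist :=
  fun t x y => if Bool.eqb t t0 && Bool.eqb x x0 && Bool.eqb y y0 then 1 else 0.
Definition xt_ind (x0 t0 : bool) : Dist :=
  fun t x y => if Bool.eqb t t0 && Bool.eqb x x0 then 1 else 0.
Definition yt_ind (y0 t0 : bool) : Dist :=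
  fun t x y => if Bool.eqb t t0 && Bool.eqb y y0 then 1 else 0.

Lemma dot_cell_ind t0 x0 y0 Z : dot (cell_ind t0 x0 y0) Z = Z t0 x0 y0.
Proof. unfold dot, cell_ind, sum2. destruct t0, x0, y0; simpl; ring. Qed.

Lemma dot_xt_ind x0 t0 Z : dot (xt_ind x0 t0) Z = margXT Z x0 t0.
Proof. unfold dot, xt_ind, margXT, sum2. destruct t0, x0; simpl; ring. Qed.

Lemma dot_yt_ind y0 t0 Z : dot (yt_ind y0 t0) Z = margYT Z y0 t0.
Proof. unfold dot, yt_ind, margYT, sum2. destruct t0, y0; simpl; ring. Qed.

Lemma dot_ones Z : dot (fun _ _ _ => 1) Z = sum2 (fun t => sum2 (fun x => sum2 (fun y => Z t x y))).
Proof. unfold dot, sum2. ring. Qed.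

Lemma aff_hull_DeltaP P W : aff_hull (DeltaP P) W ->
  sum2 (fun t => sum2 (fun x => sum2 (fun y => W t x y))) = 1 /\
  (forall x t, margXT W x t = margXT P x t) /\
  (forall y t, margYT W y t = margYT P y t).
Proof.
  intros HW. split; [|split].
  - rewrite <- dot_ones. apply (aff_hull_dot_const _ _ _ _ HW).
    intros Z [[_ HZ] _]. rewrite dot_ones. exact HZ.
  - intros x t. rewrite <- dot_xt_ind. apply (aff_hull_dot_const _ _ _ _ HW).
    intros Z [_ [HZ _]]. rewrite dot_xt_ind. apply HZ.
  - intros y t. rewrite <- dot_yt_ind. apply (aff_hull_dot_const _ _ _ _ HW).
    intros Z [_ [_ HZ]]. rewrite dot_yt_ind. apply HZ.
Qed.

Lemma DeltaP_forced_zero P Q Z t x y : DeltaP P Q -> DeltaP P Z ->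
  margXT Q x t = 0 \/ margYT Q y t = 0 -> Z t x y = 0.
Proof.
  intros [_ [HQX HQY]] [[HZn _] [HZX HZY]] [H0 | H0].
  - rewrite HQX, <- HZX in H0. unfold margXT, sum2 in H0.
    pose proof (HZn t x false). pose proof (HZn t x true). destruct y; lra.
  - rewrite HQY, <- HZY in H0. unfold margYT, sum2 in H0.
    pose proof (HZn t false y). pose proof (HZn t true y). destruct x; lra.
Qed.

Lemma aff_hull_DeltaP_forced_zero P Q W t x y : DeltaP P Q -> aff_hull (DeltaP P) W ->
  margXT Q x t = 0 \/ margYT Q y t = 0 -> W t x y = 0.
Proof.
  intros HQ HW H0. rewrite <- dot_cell_ind. apply (aff_hull_dot_const _ _ _ _ HW).
  intros Z HZ. rewrite dot_cell_ind. exact (DeltaP_forced_zero P Q Z t x y HQ HZ H0).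
Qed.

Lemma exists_pos_bool_uniform (F : bool -> R -> Prop) :
  (forall b e e', 0 < e' <= e -> F b e -> F b e') ->
  (forall b, exists e, 0 < e /\ F b e) ->
  exists e, 0 < e /\ forall b, F b e.
Proof.
  intros Hmono H. destruct (H false) as [e1 [He1 F1]], (H true) as [e2 [He2 F2]].
  pose proof (Rmin_l e1 e2). pose proof (Rmin_r e1 e2).
  assert (0 < Rmin e1 e2) by (apply Rmin_glb_lt; assumption).
  exists (Rmin e1 e2). split; [assumption|].
  intros []; [apply Hmono with e2 | apply Hmono with e1]; auto.
Qed.

Lemma pos_entries_lower_bound (Q : Dist) :
  exists e, 0 < e /\ forall t x y, 0 < Q t x y -> e <= Q t x y.
Proof.
  apply exists_pos_bool_uniform; [intros t e e' He H x y Hq; specialize (H x y Hq); lra|].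
  intros t. apply exists_pos_bool_uniform; [intros x e e' He H y Hq; specialize (H y Hq); lra|].
  intros x. apply exists_pos_bool_uniform; [intros y e e' He H Hq; specialize (H Hq); lra|].
  intros y. destruct (Rlt_dec 0 (Q t x y)) as [Hq | Hq].
  - exists (Q t x y). split; [exact Hq | intros; lra].
  - exists 1. split; [lra | intros; contradiction].
Qed.

(* Forced zeros are, like the marginal constraints, linear equations satisfied on
   DeltaP P and hence on its affine hull; only the other cells need a sign check. *)
Lemma rel_interior_DeltaP P Q : DeltaP P Q ->
  (forall t x y, 0 < Q t x y \/ margXT Q x t = 0 \/ margYT Q y t = 0) ->
  rel_interior (DeltaP P) Q.
Proof.
  intros HQ Hcells. split; [exact HQ|].
  destruct (pos_entries_lower_bound Q) as [e [He Hbound]].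
  exists e. split; [exact He|]. intros W HW Hnear.
  destruct (aff_hull_DeltaP P W HW) as [Hsum Hmarg].
  split; [split|exact Hmarg]; [|exact Hsum].
  intros t x y. destruct (Hcells t x y) as [Hpos | Hforced].
  - specialize (Hbound t x y Hpos). specialize (Hnear t x y).
    apply Rabs_def2 in Hnear. lra.
  - rewrite (aff_hull_DeltaP_forced_zero P Q W t x y HQ HW Hforced). lra.
Qed.

Definition diag_zero (Q : Dist) (t : bool) : Prop := Q t false false = 0 \/ Q t true true = 0.
Definition anti_zero (Q : Dist) (t : bool) : Prop := Q t false true = 0 \/ Q t true false = 0.

Lemma table_trichotomy (Q : Dist) t : (forall x y, 0 <= Q t x y) ->
  (forall x y, 0 < Q t x y \/ margXT Q x t = 0 \/ margYT Q y t = 0) \/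
  (diag_zero Q t /\ 0 < Q t false true /\ 0 < Q t true false) \/
  (anti_zero Q t /\ 0 < Q t false false /\ 0 < Q t true true).
Proof.
  intros Hn. unfold diag_zero, anti_zero, margXT, margYT, sum2.
  pose proof (Hn false false) as [H00 | H00]; pose proof (Hn false true) as [H01 | H01];
  pose proof (Hn true false) as [H10 | H10]; pose proof (Hn true true) as [H11 | H11];
  first
    [ right; left; split; [first [left; lra | right; lra] | lra]
    | right; right; split; [first [left; lra | right; lra] | lra]
    | left; intros [] [];
      first [left; assumption | right; left; lra | right; right; lra] ].
Qed.

Lemma argmax_diag_zero_spreads P Q t : is_argmax_condEnt P Q ->
  diag_zero Q t -> 0 < Q t false true -> 0 < Q t true false -> diag_zero Q (negb t).
Proof.
  intros HA Hz H01 H10. pose proof HA as [[[Hn _] _] _].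
  destruct Hz as [Hz | Hz]; [left | right].
  - destruct (Hn (negb t) false false) as [Hpos | Hzero]; [|auto].
    exfalso. apply (argmax_no_isolated_zero P Q t false false); auto.
  - destruct (Hn (negb t) true true) as [Hpos | Hzero]; [|auto].
    exfalso. apply (argmax_no_isolated_zero P Q t true true); auto.
Qed.

Lemma argmax_anti_zero_spreads P Q t : is_argmax_condEnt P Q ->
  anti_zero Q t -> 0 < Q t false false -> 0 < Q t true true -> anti_zero Q (negb t).
Proof.
  intros HA Hz H00 H11. pose proof HA as [[[Hn _] _] _].
  destruct Hz as [Hz | Hz]; [left | right].
  - destruct (Hn (negb t) false true) as [Hpos | Hzero]; [|auto].
    exfalso. apply (argmax_no_isolated_zero P Q t false true); auto.
  - destruct (Hn (negb t) true false) as [Hpos | Hzero]; [|auto].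
    exfalso. apply (argmax_no_isolated_zero P Q t true false); auto.
Qed.

Lemma bool_ind_negb (F : bool -> Prop) t : F t -> F (negb t) -> forall t', F t'.
Proof. intros H Hn []; destruct t; assumption. Qed.

Lemma argmax_zero_pattern_of_table P Q t : is_argmax_condEnt P Q ->
  (diag_zero Q t /\ 0 < Q t false true /\ 0 < Q t true false) \/
  (anti_zero Q t /\ 0 < Q t false false /\ 0 < Q t true true) ->
  (forall t, diag_zero Q t) \/ (forall t, anti_zero Q t).
Proof.
  intros HA [[Hz [Ha Hb]] | [Hz [Ha Hb]]]; [left | right]; apply (bool_ind_negb _ t Hz).
  - exact (argmax_diag_zero_spreads P Q t HA Hz Ha Hb).
  - exact (argmax_anti_zero_spreads P Q t HA Hz Ha Hb).
Qed.

Lemma argmax_boundary_zero_pattern P Q :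
  is_argmax_condEnt P Q -> ~ rel_interior (DeltaP P) Q ->
  (forall t, diag_zero Q t) \/ (forall t, anti_zero Q t).
Proof.
  intros HA Hnotint. pose proof HA as [HD _]. pose proof HD as [[Hn _] _].
  destruct (table_trichotomy Q false (Hn false)) as [Hint0 | H0];
    [|exact (argmax_zero_pattern_of_table P Q false HA H0)].
  destruct (table_trichotomy Q true (Hn true)) as [Hint1 | H1];
    [|exact (argmax_zero_pattern_of_table P Q true HA H1)].
  exfalso. apply Hnotint, rel_interior_DeltaP; [exact HD|]. intros []; assumption.
Qed.

Lemma table_g_min A q00 q01 q10 q11 : 0 < A -> A = q00 + q01 + q10 + q11 ->
  0 <= q00 -> 0 <= q11 -> q00 = 0 \/ q11 = 0 ->
  q00 / A - (q00 + q01) / A * ((q00 + q10) / A) =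
  - Rmin ((q00 + q01) / A * ((q00 + q10) / A))
         ((1 - (q00 + q01) / A) * (1 - (q00 + q10) / A)).
Proof.
  intros HA EA H00 H11 Hz.
  assert (E : (1 - (q00 + q01) / A) * (1 - (q00 + q10) / A)
              - (q00 + q01) / A * ((q00 + q10) / A) = q11 / A - q00 / A)
    by (subst A; field; lra).
  pose proof (Rdiv_le_0_compat q00 A H00 HA). pose proof (Rdiv_le_0_compat q11 A H11 HA).
  destruct Hz as [-> | ->]; rewrite Rdiv_0_l in *;
    [rewrite Rmin_left | rewrite Rmin_right]; lra.
Qed.

Lemma table_g_max A q00 q01 q10 q11 : 0 < A -> A = q00 + q01 + q10 + q11 ->
  0 <= q01 -> 0 <= q10 -> q01 = 0 \/ q10 = 0 ->
  q00 / A - (q00 + q01) / A * ((q00 + q10) / A) =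
  Rmin ((q00 + q01) / A * (1 - (q00 + q10) / A))
       ((1 - (q00 + q01) / A) * ((q00 + q10) / A)).
Proof.
  intros HA EA H01 H10 Hz.
  assert (E1 : (q00 + q01) / A * (1 - (q00 + q10) / A)
               - (q00 / A - (q00 + q01) / A * ((q00 + q10) / A)) = q01 / A)
    by (subst A; field; lra).
  assert (E2 : (1 - (q00 + q01) / A) * ((q00 + q10) / A)
               - (q00 / A - (q00 + q01) / A * ((q00 + q10) / A)) = q10 / A)
    by (subst A; field; lra).
  pose proof (Rdiv_le_0_compat q01 A H01 HA). pose proof (Rdiv_le_0_compat q10 A H10 HA).
  destruct Hz as [Hz | Hz]; rewrite Hz, Rdiv_0_l in *;
    [rewrite Rmin_left | rewrite Rmin_right]; lra.
Qed.

Lemma margT_margXT (Z : Dist) t : margT Z t = margXT Z false t + margXT Z true t.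
Proof. unfold margT, margXT, sum2. ring. Qed.

Lemma par_g1_extreme P Q : 0 < par_a P -> DeltaP P Q ->
  (diag_zero Q false -> par_g1 P Q = g1_min P) /\
  (anti_zero Q false -> par_g1 P Q = g1_max P).
Proof.
  intros Ha [[Hn _] [HX HY]].
  unfold par_g1, g1_min, g1_max, par_b, par_d, par_a in *.
  rewrite margT_margXT, <- !HX, <- HY in *. unfold margXT, margYT, sum2 in *.
  split; intros Hz.
  - apply (table_g_min _ _ _ _ (Q false true true)); auto; ring.
  - apply (table_g_max _ _ _ _ (Q false true true)); auto; ring.
Qed.

Lemma par_g2_extreme P Q : is_dist P -> par_a P < 1 -> DeltaP P Q ->
  (diag_zero Q true -> par_g2 P Q = g2_min P) /\
  (anti_zero Q true -> par_g2 P Q = g2_max P).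
Proof.
  intros [_ HP] Ha [[Hn _] [HX HY]].
  assert (E : 1 - par_a P = margT P true)
    by (unfold par_a, margT; rewrite <- HP; unfold sum2; ring).
  assert (Hb : 0 < margT P true) by lra.
  unfold par_g2, g2_min, g2_max, par_c, par_e. rewrite E.
  rewrite margT_margXT, <- !HX, <- HY in *. unfold margXT, margYT, sum2 in *.
  split; intros Hz.
  - apply (table_g_min _ _ _ _ (Q true true true)); auto; ring.
  - apply (table_g_max _ _ _ _ (Q true true true)); auto; ring.
Qed.

Theorem mainTheorem18 (P Qt : Dist) :
  is_dist P ->
  0 < par_a P < 1 ->
  is_argmax_condEnt P Qt ->
  rel_boundary (DeltaP P) Qt ->
  (par_g1 P Qt = g1_min P /\ par_g2 P Qt = g2_min P) \/
  (par_g1 P Qt = g1_max P /\ par_g2 P Qt = g2_max P).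
Proof.
  intros HP Ha HA [_ Hnotint]. pose proof HA as [HD _].
  destruct (par_g1_extreme P Qt ltac:(lra) HD) as [G1min G1max].
  destruct (par_g2_extreme P Qt HP ltac:(lra) HD) as [G2min G2max].
  destruct (argmax_boundary_zero_pattern P Qt HA Hnotint) as [Hdiag | Hanti].
  - left. split; [apply G1min | apply G2min]; apply Hdiag.
  - right. split; [apply G1max | apply G2max]; apply Hanti.
Qed.
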